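(* Let $Z=\bigsqcup_n Z_n$ be a bounded degree simplicial complex, where $(Z_n)_{n\in\mathbb{N}}$ is a $1$-dimensional bounded degree topological expander. Then for each $n$ there is a subcomplex $\Gamma_n\leq Z_n$ such that $(\Gamma_n)_{n\in\mathbb{N}}$ is a graphical expander.
   Context: A simplicial complex is the topological realisation of an abstract simplicial complex $(S,\mathcal S)$; bounded degree means $S$ countable and $\max_s|\{t\ne s:\{s,t\}\in\mathcal S\}|<\infty$. $|Z|$ denotes the number of $0$-simplices; closed simplices are sets of points whose support lies in a fixed element of $\mathcal S$; $\Gamma\le Z$ means an injection of $0$-simplices sending simplices to simplices. For finite $Z$ and continuous $f:Z\to\mathbb R^q$, ${}_s\mathrm{Ov}(f)=\max_{z}|\{\sigma\text{ closed simplex of }Z: z\in f(\sigma)\}|$ and ${}_s\mathrm{TO}^q(Z)=\min_f {}_s\mathrm{Ov}(f)$. A $1$-dimensional $(\Delta,\varepsilon)$-topological expander is a family $(Z_n)$ of finite $1$-dimensional simplicial complexes with $|Z_n|\to\infty$, $\deg(Z_n)\le\Delta$ and ${}_s\mathrm{TO}^1(Z_n)\ge\varepsilon|Z_n|$ for all $n$. For a finite graph $\Gamma$ with $n$ vertices, the vertex boundary $\partial A$ of $A\subseteq V\Gamma$ is the set of vertices outside $A$ adjacent to $A$, and $h(\Gamma)=\min\{|\partial A|/|A|: 0<|A|\le n/2\}$. A family $(\Gamma_n)$ of finite graphs is a graphical expander if $|V\Gamma_n|\to\infty$, $\sup_n\deg(\Gamma_n)<\infty$ and $\inf_n h(\Gamma_n)>0$.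 *)

From HB Require Import structures.
From mathcomp Require Import all_boot all_order all_algebra.
From mathcomp Require Import all_classical all_reals all_analysis.
Set Implicit Arguments. Unset Strict Implicit. Unset Printing Implicit Defensive.
Import Order.TTheory GRing.Theory Num.Theory.
Import numFieldNormedType.Exports.
Local Open Scope ring_scope.


Definition is_simplicial_complex (V : finType) (S : {set {set V}}) : Prop :=
  (forall v : V, [set v]%SET \in S) /\ (finset.set0 : {set V}) \notin S /\
  (forall s t : {set V}, s \in S -> t \subset s -> t != finset.set0 -> t \in S).

Definition dim_le1 (V : finType) (S : {set {set V}}) : Prop :=
  forall s, s \in S -> (#|s| <= 2)%N.

Definition cdeg (V : finType) (S : {set {set V}}) (s : V) : nat :=
  #|[set t | (t != s) && ([set s; t]%SET \in S)]|.

Definition cdeg_le (V : finType) (S : {set {set V}}) (D : nat) : Prop :=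
  forall s : V, (cdeg S s <= D)%N.

Definition supp (R : realType) (V : finType) (x : V -> R) : {set V} :=
  [set v | x v != 0].

(* Topological realisation |Z| inside R^V (product topology; for a finite
   complex this is the usual topology of the realisation). *)
Definition realization (R : realType) (V : finType) (S : {set {set V}})
  : set {ptws V -> R} :=
  [set x | (forall v, 0 <= x v) /\ \sum_(v : V) x v = 1 /\ supp x \in S]%classic.

Definition closed_simplex (R : realType) (V : finType) (S : {set {set V}})
  (sigma : {set V}) : set {ptws V -> R} :=
  [set x | @realization R V S x /\ supp x \subset sigma]%classic.

Definition overlap_at (R : realType) (V : finType) (S : {set {set V}})
  (f : {ptws V -> R} -> R) (z : R) : nat :=
  #|[set sigma in S | `[< exists x, @closed_simplex R V S sigma x /\ f x = z >]]|.

(* _s TO^1(Z) >= t, i.e. min over continuous f : |Z| -> R of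
   max over z of overlap_at f z is >= t *)
Definition topol_overlap_ge (R : realType) (V : finType) (S : {set {set V}})
  (t : R) : Prop :=
  forall f : {ptws V -> R} -> R,
    {within @realization R V S, continuous f}%classic ->
    exists z : R, t <= (overlap_at S f z)%:R.

Definition topological_expander (R : realType) (V : nat -> finType)
  (S : forall n, {set {set V n}}) (D : nat) (eps : R) : Prop :=
  (forall n, is_simplicial_complex (S n) /\ dim_le1 (S n)) /\
  (forall M : nat, exists N : nat, forall n, (N <= n)%N -> (M <= #|V n|)%N) /\
  (forall n, cdeg_le (S n) D) /\
  (forall n, @topol_overlap_ge R (V n) (S n) (eps * #|V n|%:R)).

Definition simple_graph (W : finType) (e : rel W) : Prop :=
  symmetric e /\ irreflexive e.

Definition vboundary (W : finType) (e : rel W) (A : {set W}) : {set W} :=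
  [set y | (y \notin A) && [exists x in A, e x y]].

Definition gdeg (W : finType) (e : rel W) (x : W) : nat := #|[set y | e x y]|.

Definition cheeger_ge (R : realType) (W : finType) (e : rel W) (c : R) : Prop :=
  forall A : {set W}, (0 < #|A|)%N -> (2 * #|A| <= #|W|)%N ->
    c <= (#|vboundary e A|%:R / #|A|%:R).

Definition graphical_expander (R : realType) (W : nat -> finType)
  (e : forall n, rel (W n)) : Prop :=
  (forall n, simple_graph (e n)) /\
  (forall M : nat, exists N : nat, forall n, (N <= n)%N -> (M <= #|W n|)%N) /\
  (exists D : nat, forall n (x : W n), (gdeg (e n) x <= D)%N) /\
  (exists c : R, 0 < c /\ forall n, cheeger_ge (e n) c).

(* Gamma <= Z: injection of 0-simplices sending simplices (vertices, edges)
   to simplices *)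
Definition subcomplex_emb (W : finType) (e : rel W) (V : finType)
  (S : {set {set V}}) (phi : W -> V) : Prop :=
  injective phi /\ (forall x, [set phi x]%SET \in S) /\
  (forall x y, e x y -> [set phi x; phi y]%SET \in S).

(* A height function g : V -> nat, extended linearly to the realisation, hits a
   point z only on the vertices of height z and on the edges spanning z.  If no
   set of at least K vertices of Z (of degree at most D) were an expander, Z
   could be cut recursively along balanced cuts with few boundary vertices;
   stacking the pieces on top of each other gives a height function whose fibres
   meet at most eps|V|/2 + 2(D+1)K simplices, against the topological overlap
   eps|V|.  Hence every Z_n contains an expanding vertex set of size linear in
   |Z_n|, and a largest one induces Gamma_n. *)

From HB Require Import structures.
From mathcomp Require Import all_boot all_order all_algebra.
From mathcomp Require Import all_classical all_reals all_analysis.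
From mathcomp Require Import ring lra zify.
Set Implicit Arguments. Unset Strict Implicit. Unset Printing Implicit Defensive.
Import Order.TTheory GRing.Theory Num.Theory.
Import numFieldNormedType.Exports.
Local Open Scope ring_scope.

Section Skeleton.
Variables (V : finType) (S : {set {set V}}).

Definition adj (u w : V) : bool := (w != u) && ([set u; w]%SET \in S).

Lemma adj_sym : symmetric adj.
Proof. by move=> u w; rewrite /adj eq_sym finset.setUC. Qed.

Lemma adj_irrefl : irreflexive adj.
Proof. by move=> u; rewrite /adj eqxx. Qed.

Definition boundary_in (U A : {set V}) : {set V} :=
  [set y in U | (y \notin A) && [exists x in A, adj x y]].

Definition out_edges (B : {set V}) : {set V * V} :=
  [set p | (p.1 \in B) && adj p.1 p.2].

Definition cut_edges (U A : {set V}) : {set V * V} :=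
  [set p | [&& p.1 \in U, p.2 \in U, adj p.1 p.2 & (p.1 \in A) != (p.2 \in A)]].

Lemma boundary_in0 (U : {set V}) : boundary_in U finset.set0 = finset.set0.
Proof.
apply/setP => y; rewrite !inE; case: (y \in U) => //=.
by apply/existsP => -[x]; rewrite inE.
Qed.

Lemma boundary_inU (U B A : {set V}) :
  boundary_in U (B :|: A) \subset boundary_in U B :|: boundary_in (U :\: B) A.
Proof.
apply/fintype.subsetP => y; rewrite !inE negb_or => /and3P [yU /andP [yB yA]].
case/existsP => x; rewrite inE => /andP [/orP [xB | xA] xy].
  by rewrite yU yB /=; apply/orP; left; apply/existsP; exists x; rewrite xB.
by rewrite yU yB yA /=; apply/orP; right; apply/existsP; exists x; rewrite xA.
Qed.

Variable D : nat.
Hypothesis deg_le : cdeg_le S D.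

Lemma card_out_edges (B : {set V}) : (#|out_edges B| <= D * #|B|)%N.
Proof.
rewrite -sum1dep_card -(pair_big_dep (mem B) adj (fun _ _ => 1%N)) /=.
rewrite mulnC -sum_nat_const; apply: leq_sum => x _.
by rewrite sum1dep_card; exact: deg_le.
Qed.

Lemma card_cut_edges (U A : {set V}) :
  (#|cut_edges U A| <= 2 * D * #|boundary_in U A|)%N.
Proof.
set B := boundary_in U A.
have out_le := card_out_edges B.
apply: (@leq_trans (#|out_edges B| + #|out_edges B|)); last by lia.
apply: leq_trans (leq_add (leqnn _) (leq_imset_card (fun p => (p.2, p.1)) _)).
apply: leq_trans (leq_card_setU _ _).1; apply: subset_leq_card.
apply/fintype.subsetP => -[a b]; rewrite !inE /=.
case/and4P => aU bU ab; case aA: (a \in A); case bA: (b \in A) => //= _.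
  apply/orP; right; apply/imsetP; exists (b, a) => //.
  rewrite !inE /= bU bA adj_sym ab andbT /=; apply/existsP; exists a; by rewrite aA.
apply/orP; left; rewrite aU ab andbT /=; apply/existsP; exists b; by rewrite bA adj_sym.
Qed.

End Skeleton.

Section Fibres.
Variables (R : realType) (V : finType) (S : {set {set V}}).

Definition fibre_count (U : {set V}) (g : V -> nat) (z : R) : nat :=
  #|[set v in U | (g v)%:R == z]| +
  #|[set p : V * V | [&& p.1 \in U, p.2 \in U, adj S p.1 p.2,
                        (g p.1)%:R <= z & z <= (g p.2)%:R]]|.

Lemma fibre_count_le_deg (D : nat) (U : {set V}) (g : V -> nat) (z : R) :
  cdeg_le S D -> (fibre_count U g z <= D.+1 * #|U|)%N.
Proof.
move=> deg_le; rewrite /fibre_count mulSn; apply: leq_add.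
  by apply: subset_leq_card; apply/fintype.subsetP => v; rewrite inE => /andP [].
apply: leq_trans (card_out_edges deg_le U); apply: subset_leq_card.
by apply/fintype.subsetP => p; rewrite !inE => /and5P [-> _ -> _ _].
Qed.

Lemma fibre_count_shift (U : {set V}) (g h : V -> nat) (a : nat) (z : R) :
  {in U, forall v, g v = (a + h v)%N} ->
  fibre_count U g z = fibre_count U h (z - a%:R).
Proof.
move=> gh; rewrite /fibre_count; congr (_ + _); apply: eq_card => v; rewrite !inE.
  case vU: (v \in U) => //=; rewrite gh // natrD.
  by apply/eqP/eqP => H; lra.
case/boolP: (v.1 \in U) => //= v1U; case/boolP: (v.2 \in U) => //= v2U.
rewrite !gh // !natrD; case: (adj S v.1 v.2) => //=.
by congr andb; apply/idP/idP => H; lra.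
Qed.

Lemma fibre_count_below (U : {set V}) (g : V -> nat) (a : nat) (z : R) :
  {in U, forall v, a <= g v}%N -> z < a%:R -> fibre_count U g z = 0%N.
Proof.
move=> ga za; apply/eqP; rewrite /fibre_count addn_eq0 !cards_eq0.
apply/andP; split; apply/eqP/setP => v; rewrite !inE.
  case vU: (v \in U) => //=; apply/negbTE; apply: contraTneq za => <-.
  by rewrite -leNgt ler_nat ga.
case/boolP: (v.1 \in U) => //= v1U.
suff -> : ((g v.1)%:R <= z) = false by rewrite !andbF.
by apply/negbTE; rewrite -ltNge; apply: (lt_le_trans za); rewrite ler_nat ga.
Qed.

Lemma fibre_count_above (U : {set V}) (g : V -> nat) (a : nat) (z : R) :
  {in U, forall v, g v < a}%N -> a%:R <= z -> fibre_count U g z = 0%N.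
Proof.
move=> ga za; apply/eqP; rewrite /fibre_count addn_eq0 !cards_eq0.
apply/andP; split; apply/eqP/setP => v; rewrite !inE.
  case vU: (v \in U) => //=; apply/negbTE; apply: contraTneq za => <-.
  by rewrite -ltNge ltr_nat ga.
case/boolP: (v.2 \in U) => v2U; last by rewrite !andbF.
suff -> : (z <= (g v.2)%:R) = false by rewrite !andbF.
by apply/negbTE; rewrite -ltNge; apply: (lt_le_trans _ za); rewrite ltr_nat ga.
Qed.

Lemma fibre_count_split (U A : {set V}) (g : V -> nat) (z : R) : A \subset U ->
  (fibre_count U g z <=
   fibre_count A g z + fibre_count (U :\: A) g z + #|cut_edges S U A|)%N.
Proof.
move=> AU; rewrite /fibre_count.
set P1 := [set v in U | _]; set P2 := [set p : V * V | _ ].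
set A1 := [set v in A | _]; set A2 := [set p : V * V | [&& p.1 \in A, _ & _]].
set Q1 := [set v in U :\: A | _].
set Q2 := [set p : V * V | [&& p.1 \in U :\: A, _ & _]].
have vertices_le : (#|P1| <= #|A1| + #|Q1|)%N.
  apply: leq_trans (leq_card_setU _ _).1; apply: subset_leq_card.
  apply/fintype.subsetP => v; rewrite !inE.
  by case: (v \in A); case: (v \in U); case: (_ == _).
have edges_le : (#|P2| <= #|A2| + #|Q2| + #|cut_edges S U A|)%N.
  apply: (@leq_trans #|(A2 :|: Q2) :|: cut_edges S U A|).
    apply: subset_leq_card; apply/fintype.subsetP => -[a b]; rewrite !inE /=.
    case/and5P => aU bU ab h1 h2; rewrite aU bU ab h1 h2 !andbT /=.
    have aU' : a \in A -> a \in U by move=> ?; apply: (fintype.subsetP AU).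
    by case: (a \in A); case: (b \in A).
  apply: leq_trans (leq_card_setU _ _).1 _; rewrite leq_add2r.
  exact: (leq_card_setU _ _).1.
lia.
Qed.

Definition stack_heights (A : {set V}) (g1 g2 : V -> nat) (v : V) : nat :=
  if v \in A then g1 v else (#|A| + g2 v)%N.

Lemma fibre_count_stack (U A : {set V}) (g1 g2 : V -> nat) (z : R) :
  A \subset U -> {in A, forall v, g1 v < #|A|}%N ->
  (fibre_count U (stack_heights A g1 g2) z <=
   (if (z < #|A|%:R)%R then fibre_count A g1 z
    else fibre_count (U :\: A) g2 (z - #|A|%:R)) + #|cut_edges S U A|)%N.
Proof.
move=> AU g1_lt; set g := stack_heights A g1 g2.
have g_A : {in A, forall v, g v = (0 + g1 v)%N} by move=> v vA; rewrite /g /stack_heights vA.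
have g_Q : {in U :\: A, forall v, g v = (#|A| + g2 v)%N}.
  by move=> v; rewrite inE /g /stack_heights => /andP [/negbTE ->].
have := fibre_count_split g z AU; rewrite (fibre_count_shift z g_A) subr0.
case: ltP => hz.
  rewrite (@fibre_count_below (U :\: A) g #|A|) // => [|v /g_Q ->]; last exact: leq_addr.
  lia.
rewrite (@fibre_count_above A g1 #|A|) // (fibre_count_shift z g_Q); lia.
Qed.

End Fibres.

Section Expansion.
Variables (R : realType) (V : finType) (S : {set {set V}}).

Definition expanding (c : R) (U : {set V}) : Prop :=
  forall A : {set V}, A \subset U -> (0 < #|A|)%N -> (2 * #|A| <= #|U|)%N ->
    c <= #|boundary_in S U A|%:R / #|A|%:R.

Lemma expanding0 (c : R) : expanding c finset.set0.
Proof. by move=> A; rewrite finset.subset0 => /eqP ->; rewrite cards0. Qed.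

Definition max_expanding (c : R) : {set V} :=
  [arg max_(U > finset.set0 | `[< expanding c U >]) #|U|].

Lemma max_expanding_expanding (c : R) : expanding c (max_expanding c).
Proof. by rewrite /max_expanding; case: arg_maxnP => [|U /asboolP] //; exact/asboolP/expanding0. Qed.

Lemma max_expanding_max (c : R) (U : {set V}) :
  expanding c U -> (#|U| <= #|max_expanding c|)%N.
Proof.
move=> expU; rewrite /max_expanding; case: arg_maxnP => [|M _ M_max]; last exact/M_max/asboolP.
exact/asboolP/expanding0.
Qed.

Variables (c : R) (K : nat).
Hypothesis no_large_expanding : forall U : {set V}, (K <= #|U|)%N -> ~ expanding c U.

Lemma sparse_subset (U : {set V}) : (K <= #|U|)%N ->
  exists A : {set V}, [/\ A \subset U, (0 < #|A|)%N, (2 * #|A| <= #|U|)%N &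
    #|boundary_in S U A|%:R < c * #|A|%:R].
Proof.
move/no_large_expanding/existsNP => [A /not_implyP [AU /not_implyP [A0 /not_implyP [A2]]]].
by move/negP; rewrite -ltNge ltr_pdivrMr ?ltr0n // => lt_c; exists A.
Qed.

(* Greedily add sparse subsets of the remainder; as each one has at most half of
   the remainder, the union stops between |U|/4 and 5|U|/8 vertices. *)
Lemma sparse_cut_extend (U B : {set V}) : B \subset U -> (2 * K <= #|U|)%N ->
  (4 * #|B| < #|U|)%N -> #|boundary_in S U B|%:R <= c * #|B|%:R ->
  exists A : {set V}, [/\ A \subset U, (#|U| <= 4 * #|A|)%N, (4 * #|A| <= 3 * #|U|)%N &
    #|boundary_in S U A|%:R <= c * #|A|%:R].
Proof.
move=> + UK; have [j] := ubnP (#|U| - #|B|); elim: j B => // j IH B.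
rewrite ltnS => Bj BU small_B bnd_B.
have card_UB : #|U :\: B| = (#|U| - #|B|)%N by rewrite cardsDS.
have [A [AUB A0 A2 bnd_A]] := @sparse_subset (U :\: B) ltac:(rewrite card_UB; lia).
have card_BA : #|B :|: A| = (#|B| + #|A|)%N.
  rewrite cardsU (_ : B :&: A = finset.set0) ?cards0 ?subn0 //.
  apply/setP => y; rewrite !inE; apply/negbTE; apply/andP => -[yB yA].
  by move: (fintype.subsetP AUB y yA); rewrite inE yB.
have BAU : B :|: A \subset U.
  by rewrite finset.subUset BU (fintype.subset_trans AUB) ?finset.subsetDl.
have bnd_BA : #|boundary_in S U (B :|: A)|%:R <= c * #|B :|: A|%:R.
  have := leq_trans (subset_leq_card (boundary_inU S U B A)) (leq_card_setU _ _).1.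
  rewrite -(ler_nat R) natrD card_BA natrD mulrDr => /le_trans; apply.
  by rewrite lerD // ltW.
case: (leqP #|U| (4 * #|B :|: A|)) => large_BA.
  by exists (B :|: A); split => //; move: A2 small_B; rewrite card_BA card_UB; lia.
by apply: (IH (B :|: A)) => //; rewrite card_BA; lia.
Qed.

Lemma balanced_sparse_cut (U : {set V}) : (2 * K < #|U|)%N ->
  exists A : {set V}, [/\ A \subset U, (#|U| <= 4 * #|A|)%N, (4 * #|A| <= 3 * #|U|)%N &
    #|boundary_in S U A|%:R <= c * #|A|%:R].
Proof.
move=> UK; apply: (@sparse_cut_extend U finset.set0).
- exact: finset.sub0set.
- exact: ltnW.
- by rewrite cards0; lia.
- by rewrite boundary_in0 cards0 mulr0.
Qed.

Variable D : nat.
Hypotheses (deg_le : cdeg_le S D) (c_ge0 : 0 <= c).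

Lemma low_fibre_height (U : {set V}) : exists g : V -> nat,
  {in U, forall v, g v < #|U|}%N /\
  forall z : R, (fibre_count S U g z)%:R <= 8%:R * (D%:R * c) * #|U|%:R + (D.+1 * (2 * K))%:R.
Proof.
have dc_ge0 : 0 <= D%:R * c by rewrite mulr_ge0 ?ler0n.
have [k] := ubnP #|U|; elim: k U => // k IH U; rewrite ltnS => Uk.
case: (leqP #|U| (2 * K)) => UK.
  exists (fun=> 0%N); split=> [v vU | z]; first by apply/card_gt0P; exists v.
  have := fibre_count_le_deg U (fun=> 0%N) z deg_le.
  rewrite -(ler_nat R) => /le_trans; apply; rewrite -[leLHS]add0r lerD ?ler_nat ?leq_mul //.
  by rewrite !mulr_ge0 ?ler0n.
have [A [AU lowA highA bnd_A]] := balanced_sparse_cut UK.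
have card_UA : #|U :\: A| = (#|U| - #|A|)%N by rewrite cardsDS.
have [g1 [g1_lt g1_fib]] := IH A ltac:(lia).
have [g2 [g2_lt g2_fib]] := IH (U :\: A) ltac:(rewrite card_UA; lia).
exists (stack_heights A g1 g2); split => [v vU | z].
  rewrite /stack_heights; case: ifPn => vA; first by apply: leq_trans (g1_lt v vA) _; lia.
  by have := g2_lt v; rewrite inE vA vU card_UA => /(_ isT); lia.
have cut_le : #|cut_edges S U A|%:R <= 2%:R * (D%:R * c) * #|A|%:R.
  apply: le_trans (_ : (2 * D)%:R * #|boundary_in S U A|%:R <= _).
    by rewrite -natrM ler_nat card_cut_edges.
  by rewrite natrM -!mulrA ler_wpM2l ?ler0n // ler_wpM2l ?ler0n.
have Ax_ge0 : 0 <= D%:R * c * #|A|%:R by rewrite mulr_ge0 ?ler0n.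
have := fibre_count_stack S g2 z AU g1_lt; rewrite -(ler_nat R) natrD.
(* Below height |A| only A and the cut contribute, 10 Dc|A| <= 8 Dc|U| as
   4|A| <= 3|U|; above it only U :\: A and the cut, 8 Dc|U :\: A| + 2 Dc|A| <= 8 Dc|U|. *)
case: ifP => _ stack_le.
  have Ax_le : D%:R * c * #|A|%:R <= 3 / 4 * (D%:R * c * #|U|%:R).
    rewrite mulrCA ler_wpM2l //.
    by move: highA; rewrite -(ler_nat R) !natrM => ?; lra.
  by have := g1_fib z; lra.
have := g2_fib (z - #|A|%:R); rewrite card_UA natrB ?subset_leq_card //.
by lra.
Qed.

End Expansion.

Section Overlap.
Variables (R : realType) (V : finType) (S : {set {set V}}).

Definition height_map (g : V -> nat) : {ptws V -> R} -> R :=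
  fun x => \sum_v x v * (g v)%:R.

Lemma height_map_continuous (g : V -> nat) : continuous (height_map g).
Proof.
apply: continuous_big => [|v _ x]; first exact: add_continuous.
exact: (continuous_comp (@proj_continuous V (fun=> R) v x) (@mulrr_continuous R (g v)%:R (x v))).
Qed.

Lemma closed_simplex_sum (sigma : {set V}) (x : {ptws V -> R}) (F : V -> R) :
  closed_simplex S sigma x -> \sum_v x v * F v = \sum_(v in sigma) x v * F v.
Proof.
move=> [_ supp_x]; rewrite (bigID (mem sigma)) /= [X in _ + X]big1 ?addr0 // => v.
rewrite -topredE /= => v_sigma; suff -> : x v = 0 by rewrite mul0r.
by apply/eqP; apply: contraNT v_sigma => xv; apply: (fintype.subsetP supp_x); rewrite inE.
Qed.

Lemma height_map_vertex (g : V -> nat) (v : V) (x : {ptws V -> R}) :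
  closed_simplex S [set v] x -> height_map g x = (g v)%:R.
Proof.
move=> x_v; have [[_ [sum_x _]] _] := x_v.
have {}sum_x : \sum_v x v * 1 = 1 by under eq_bigr do rewrite mulr1.
rewrite (closed_simplex_sum _ x_v) big_set1 mulr1 in sum_x.
by rewrite /height_map (closed_simplex_sum _ x_v) big_set1 sum_x mul1r.
Qed.

Lemma height_map_edge (g : V -> nat) (u w : V) (x : {ptws V -> R}) : u != w ->
  closed_simplex S [set u; w] x -> (g u)%:R <= (g w)%:R :> R ->
  (g u)%:R <= height_map g x <= (g w)%:R.
Proof.
move=> uw x_uw le_uw; have [[x_ge0 [sum_x _]] _] := x_uw.
have {}sum_x : \sum_v x v * 1 = 1 by under eq_bigr do rewrite mulr1.
have sum2 (F : V -> R) : \sum_(v in [set u; w]) x v * F v = x u * F u + x w * F w.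
  by rewrite big_setU1 ?inE //= big_set1.
rewrite (closed_simplex_sum _ x_uw) sum2 !mulr1 in sum_x.
rewrite /height_map (closed_simplex_sum _ x_uw) sum2.
have xu_le1 : x u <= 1 by have := x_ge0 w; lra.
have -> : x w = 1 - x u by lra.
have : 0 <= x u * ((g w)%:R - (g u)%:R) by rewrite mulr_ge0 ?subr_ge0.
have : 0 <= (1 - x u) * ((g w)%:R - (g u)%:R) by rewrite mulr_ge0 ?subr_ge0.
by move=> *; apply/andP; split; lra.
Qed.

Lemma simplex_vertex_or_edge (sigma : {set V}) :
  is_simplicial_complex S -> dim_le1 S -> sigma \in S ->
  (exists v, sigma = [set v]) \/ (exists u w, u != w /\ sigma = [set u; w]).
Proof.
move=> [_ [S_0 _]] dim_S sigma_S.
have : sigma != finset.set0 by apply: contraNneq S_0 => <-.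
rewrite -card_gt0; move: (dim_S _ sigma_S).
case card_sigma: #|sigma| => [|[|[|]]] // _ _; [left | right].
  by apply/cards1P; rewrite card_sigma.
by apply/cards2P; rewrite card_sigma.
Qed.

Lemma overlap_at_height_map_le (g : V -> nat) (z : R) :
  is_simplicial_complex S -> dim_le1 S ->
  (overlap_at S (height_map g) z <= fibre_count S [set: V] g z)%N.
Proof.
move=> S_sc S_dim; rewrite /overlap_at /fibre_count.
set Vz := [set v in [set: V] | _]; set Pz := [set p : V * V | _].
apply: leq_trans (leq_add (leq_imset_card (fun v => [set v]) Vz)
                          (leq_imset_card (fun p => [set p.1; p.2]) Pz)).
apply: leq_trans (leq_card_setU _ _).1; apply: subset_leq_card.
apply/fintype.subsetP => sigma; rewrite inE => /andP [sigma_S /asboolP [x [x_sigma fx_z]]].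
case: (simplex_vertex_or_edge S_sc S_dim sigma_S) => [[v def_sigma] | [u [w [uw def_sigma]]]].
  rewrite def_sigma in x_sigma *; apply/setUP; left; apply/imsetP; exists v => //.
  by rewrite /Vz !inE -fx_z (height_map_vertex g x_sigma) eqxx.
rewrite def_sigma in x_sigma sigma_S *; apply/setUP; right; apply/imsetP.
have [le_uw | lt_wu] := leP ((g u)%:R : R) (g w)%:R.
  exists (u, w) => //; rewrite /Pz !inE /= /adj eq_sym uw sigma_S -fx_z /=.
  exact: height_map_edge.
exists (w, u); last by rewrite finset.setUC.
rewrite /Pz !inE /= /adj uw finset.setUC sigma_S -fx_z /=.
apply: (@height_map_edge g w u x); [by rewrite eq_sym | by rewrite finset.setUC | exact: ltW].
Qed.

End Overlap.

Section LargeExpandingSubset.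
Variables (R : realType) (V : finType) (S : {set {set V}}) (D : nat) (eps : R).
Hypotheses (S_sc : is_simplicial_complex S) (S_dim : dim_le1 S) (deg_le : cdeg_le S D).
Hypotheses (eps_gt0 : 0 < eps) (overlap_ge : topol_overlap_ge S (eps * #|V|%:R)).

Let c := eps / (16 * D.+1)%:R.

Lemma large_expanding_subset (K : nat) : (8 * D.+1 * K)%:R <= eps * #|V|%:R ->
  exists U : {set V}, expanding S c U /\ (K <= #|U|)%N.
Proof.
move=> K_small; case: (posnP K) => [-> | K_gt0].
  by exists finset.set0; split => //; exact: expanding0.
apply: contrapT => no_large.
have c_ge0 : 0 <= c by rewrite divr_ge0 ?ler0n ?ltW.
have no_large_expanding (U : {set V}) : (K <= #|U|)%N -> ~ expanding S c U.
  by move=> KU expU; apply: no_large; exists U.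
have [g [_ fibre_le]] := low_fibre_height no_large_expanding deg_le c_ge0 [set: V].
have [z overlap_z] := overlap_ge (continuous_subspaceT (@height_map_continuous R V g)).
have := overlap_at_height_map_le g z S_sc S_dim; rewrite -(ler_nat R) => overlap_le.
have fibre_z := fibre_le z; rewrite cardsT in fibre_z.
have eps_c : eps = c * (16 * D.+1)%:R by rewrite /c divfK ?pnatr_eq0.
rewrite eps_c !natrM -!natr1 in K_small overlap_z fibre_z.
have K_ge1 : 1 <= K%:R :> R by rewrite ler1n.
have DK_ge0 : 0 <= D%:R * K%:R :> R by rewrite mulr_ge0 ?ler0n.
have cV_ge0 : 0 <= c * #|V|%:R by rewrite mulr_ge0 ?ler0n.
have cDV_ge0 : 0 <= c * (D%:R * #|V|%:R) by rewrite mulr_ge0 // mulr_ge0 ?ler0n.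
(* The fibres of g meet at most eps|V|/2 + eps|V|/4 simplices. *)
lra.
Qed.

Lemma max_expanding_large (K : nat) : (8 * D.+1 * K)%:R <= eps * #|V|%:R ->
  (K <= #|max_expanding S c|)%N.
Proof.
by case/large_expanding_subset => U [expU KU]; exact: leq_trans KU (max_expanding_max expU).
Qed.

End LargeExpandingSubset.

Section InducedSubgraph.
Variables (V : finType) (S : {set {set V}}) (U : {set V}).

Definition induced : rel {x : V | x \in U} := fun x y => adj S (val x) (val y).

Lemma card_induced : #|{: {x : V | x \in U}}| = #|U|.
Proof. by rewrite card_sig; apply: eq_card. Qed.

Lemma induced_subcomplex_emb : is_simplicial_complex S -> subcomplex_emb induced S val.
Proof. by move=> [S_1 _]; split; [exact: val_inj | split=> // x y /andP []]. Qed.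

Lemma induced_simple_graph : simple_graph induced.
Proof. by split=> [x y | x]; [exact: adj_sym | exact: adj_irrefl]. Qed.

Lemma induced_gdeg_le (D : nat) (x : {x : V | x \in U}) :
  cdeg_le S D -> (gdeg induced x <= D)%N.
Proof.
move=> deg_le; rewrite /gdeg -(card_imset _ val_inj); apply: leq_trans (deg_le (val x)).
by apply: subset_leq_card; apply/fintype.subsetP => t /imsetP [y]; rewrite !inE => xy ->.
Qed.

Lemma boundary_in_induced (A : {set {x : V | x \in U}}) :
  boundary_in S U (val @: A) \subset val @: vboundary induced A.
Proof.
apply/fintype.subsetP => y; rewrite inE => /and3P [yU yA /existsP [_ /andP [/imsetP [x xA ->] xy]]].
apply/imsetP; exists (Sub y yU); last by rewrite SubK.
rewrite inE; apply/andP; split; last by apply/existsP; exists x; rewrite xA.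
by apply: contra yA => yA'; apply/imsetP; exists (Sub y yU).
Qed.

Lemma induced_cheeger (R : realType) (c : R) : expanding S c U -> cheeger_ge induced c.
Proof.
move=> expU A A_gt0 A_small.
have card_valA : #|val @: A| = #|A| by rewrite card_imset //; exact: val_inj.
have valA_U : val @: A \subset U by apply/fintype.subsetP => _ /imsetP [x _ ->]; exact: valP.
have := expU _ valA_U; rewrite card_valA -card_induced => /(_ A_gt0 A_small) /le_trans; apply.
rewrite ler_wpM2r ?invr_ge0 ?ler0n // ler_nat.
exact: leq_trans (subset_leq_card (boundary_in_induced A)) (leq_imset_card _ _).
Qed.

End InducedSubgraph.

Lemma eventually_ler_mul (R : realType) (eps x : R) (f : nat -> nat) : 0 < eps ->
  (forall M, exists N, forall n, (N <= n)%N -> (M <= f n)%N) ->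
  exists N, forall n, (N <= n)%N -> x <= eps * (f n)%:R.
Proof.
move=> eps_gt0 f_unbounded; have [N f_large] := f_unbounded (Num.bound (`|x| / eps)).
exists N => n /f_large bound_le; rewrite mulrC -ler_pdivrMr //.
apply: le_trans (ler_wpM2r _ (ler_norm x)) _; first by rewrite invr_ge0 ltW.
have norm_le_bound := archi_boundP (divr_ge0 (normr_ge0 x) (ltW eps_gt0)).
by apply: le_trans (ltW norm_le_bound) _; rewrite ler_nat.
Qed.

Unset Implicit Arguments.

Theorem corollary1p5 (R : realType) (V : nat -> finType)
  (S : forall n, {set {set V n}}) :
  (exists (D : nat) (eps : R), 0 < eps /\ topological_expander S D eps) ->
  exists (W : nat -> finType) (e : forall n, rel (W n)) (phi : forall n, W n -> V n),
    (forall n, subcomplex_emb (e n) (S n) (phi n)) /\ graphical_expander R e.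
Proof.
move=> [D [eps [eps_gt0 [S_sc [V_large [deg_le overlap_ge]]]]]].
pose c := eps / (16 * D.+1)%:R; pose U n := max_expanding (S n) c.
exists (fun n => {x : V n | x \in U n}), (fun n => @induced (V n) (S n) (U n)), (fun n => val).
split=> [n | ]; first exact: induced_subcomplex_emb (S_sc n).1.
split; first by move=> n; exact: induced_simple_graph.
split=> [M | ].
  have [N V_ge] := eventually_ler_mul (8 * D.+1 * M)%:R eps_gt0 V_large.
  exists N => n /V_ge M_small; rewrite card_induced.
  exact: (max_expanding_large (S_sc n).1 (S_sc n).2 (deg_le n) eps_gt0 (overlap_ge n) M_small).
split; first by exists D => n x; exact: induced_gdeg_le (deg_le n).
exists c; split; first by rewrite divr_gt0 ?ltr0n.
by move=> n; apply: induced_cheeger; exact: max_expanding_expanding.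
Qed.
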